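(* Let $\mathcal{I}$ be a finite index set and, for each $i\in\mathcal{I}$, let $\mathcal{A}_i$ be a finite set with $|\mathcal{A}_i|\ge 2$. Let $\mathcal{Y}\subseteq\mathcal{I}$, let $h_i:\mathcal{A}_i\to(0,\infty)$ for $i\in\mathcal{Y}$, and let $\mathcal{B}\subseteq\prod_{i\in\mathcal{I}}\mathcal{A}_i$ be a set of configurations such that the projection $\mathbf{P}_{\mathcal{Y}}(\mathbf{x})=(x_i)_{i\in\mathcal{Y}}$ is injective on $\mathcal{B}$. For each $i\in\mathcal{Y}$ fix $\alpha_i\in\mathcal{A}_i$ and put $\mathcal{A}_i^-=\mathcal{A}_i\setminus\{\alpha_i\}$. Define $\boldsymbol{\Xi}(\mathbf{x}_{\mathcal{Y}})=\big(([\gamma=x_i])_{\gamma\in\mathcal{A}_i}\big)_{i\in\mathcal{Y}}\in\{0,1\}^{\sum_{i\in\mathcal{Y}}|\mathcal{A}_i|}$ and $\tilde{\boldsymbol{\Xi}}(\mathbf{x}_{\mathcal{Y}})=\big(([\gamma=x_i])_{\gamma\in\mathcal{A}_i^-}\big)_{i\in\mathcal{Y}}\in\{0,1\}^{\sum_{i\in\mathcal{Y}}|\mathcal{A}_i^-|}$, where $[P]$ is $1$ if $P$ holds and $0$ otherwise. Let $\boldsymbol{\lambda}$ have coordinates $\lambda_i^{(\alpha)}=\log h_i(\alpha)$ ($i\in\mathcal{Y},\alpha\in\mathcal{A}_i$) and $\tilde{\boldsymbol{\lambda}}$ have coordinates $\tilde\lambda_i^{(\alpha)}=\log\big(h_i(\alpha)/h_i(\alpha_i)\big)$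 ($i\in\mathcal{Y},\alpha\in\mathcal{A}_i^-$). Let $\mathcal{K}_{\mathcal{Y}}(\mathcal{B})$ be the convex hull of $\{\boldsymbol{\Xi}(\mathbf{P}_{\mathcal{Y}}(\mathbf{x})):\mathbf{x}\in\mathcal{B}\}$ and $\tilde{\mathcal{K}}_{\mathcal{Y}}(\mathcal{B})$ the convex hull of $\{\tilde{\boldsymbol{\Xi}}(\mathbf{P}_{\mathcal{Y}}(\mathbf{x})):\mathbf{x}\in\mathcal{B}\}$. Consider LP1: maximize $\boldsymbol{\lambda}\mathbf{g}^T$ over $\mathbf{g}\in\mathcal{K}_{\mathcal{Y}}(\mathcal{B})$, with output configuration $\mathbf{P}_{\mathcal{Y}}^{-1}(\boldsymbol{\Xi}^{-1}(\mathbf{g}_{\mathrm{opt}}))$ for the maximizer $\mathbf{g}_{\mathrm{opt}}$; and LP2: maximize $\tilde{\boldsymbol{\lambda}}\tilde{\mathbf{g}}^T$ over $\tilde{\mathbf{g}}\in\tilde{\mathcal{K}}_{\mathcal{Y}}(\mathcal{B})$, with output configuration $\mathbf{P}_{\mathcal{Y}}^{-1}(\tilde{\boldsymbol{\Xi}}^{-1}(\tilde{\mathbf{g}}_{\mathrm{opt}}))$ for the maximizer $\tilde{\mathbf{g}}_{\mathrm{opt}}$. Then LP2 produces the same (optimum) configuration output as LP1, namely a configuration $\mathbf{x}_{\mathrm{opt}}\in\mathcal{B}$ maximizing $\sum_{i\in\mathcal{Y}}\log h_i(x_i)$ over $\mathcal{B}$.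
   Context: This arises from the problem of maximizing a global function $u(\mathbf{x})=\prod_{i\in\mathcal{Y}}h_i(x_i)\prod_{j\in\mathcal{L}}[\mathbf{x}_j\in\mathcal{B}_j]$ over configurations $\mathbf{x}=(x_i)_{i\in\mathcal{I}}\in\prod_i\mathcal{A}_i$, where $\mathcal{Y}$ is the set of variables attached to degree-one (pendant) factor nodes of the factor graph, $h_i$ is the product of those pendant factors, and $\mathcal{B}$ is the set of configurations satisfying all non-pendant indicator factors; maximizing $u$ is equivalent to maximizing $\sum_{i\in\mathcal{Y}}\log h_i(x_i)$ over $\mathcal{B}$. $\mathbf{P}_{\mathcal{Y}}^{-1}$ denotes the inverse of $\mathbf{P}_{\mathcal{Y}}$ restricted to $\mathcal{B}$. *)

From HB Require Import structures.
From mathcomp Require Import all_boot all_order all_algebra.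
From mathcomp Require Import all_classical all_reals all_analysis.
Set Implicit Arguments. Unset Strict Implicit. Unset Printing Implicit Defensive.
Import Order.TTheory GRing.Theory Num.Theory.
Local Open Scope ring_scope.

Section Defs.
Variables (R : realType) (I : finType) (A : I -> finType) (Y : {set I}).

Definition config := {dffun forall i : I, A i}.

Definition Yt := {i : I | i \in Y}.

Definition configY := forall i : Yt, A (val i).

Definition PY (x : config) : configY := fun i => x (val i).

Definition coordJ := {i : Yt & A (val i)}.

(* coordinates of tilde Xi: pairs (i, gamma), i in Y, gamma in A_i^- = A_i \ {alpha_i} *)
Definition coordJt (alpha : forall i : Yt, A (val i)) :=
  {j : coordJ | tagged j != alpha (tag j)}.

Definition Xi (xY : configY) : coordJ -> R :=
  fun j => if tagged j == xY (tag j) then 1 else 0.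

Definition Xit (alpha : forall i : Yt, A (val i)) (xY : configY)
  : coordJt alpha -> R := fun j => Xi xY (val j).

Definition lam (h : forall i : Yt, A (val i) -> R) : coordJ -> R :=
  fun j => ln (h (tag j) (tagged j)).

Definition lamt (h : forall i : Yt, A (val i) -> R)
  (alpha : forall i : Yt, A (val i)) : coordJt alpha -> R :=
  fun j => ln (h (tag (val j)) (tagged (val j)) / h (tag (val j)) (alpha (tag (val j)))).

End Defs.

Arguments PY {I A} Y x i.
Arguments Xi R {I A Y} xY j.
Arguments Xit R {I A Y} alpha xY j.
Arguments lam {R I A Y} h j.
Arguments lamt {R I A Y} h alpha j.

Definition conv_hull (R : realType) (C J : finType) (S : {set C}) (f : C -> J -> R)
  : set (J -> R) :=
  fun g => exists w : C -> R,
    [/\ forall c, 0 <= w c,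
        forall c, c \notin S -> w c = 0,
        \sum_(c : C) w c = 1
      & forall j, g j = \sum_(c : C) w c * f c j].

Definition dotv (R : realType) (J : finType) (lam g : J -> R) : R :=
  \sum_(j : J) lam j * g j.

Definition is_lp_max (R : realType) (J : finType) (K : set (J -> R)) (lam g : J -> R) :=
  K g /\ forall g', K g' -> dotv lam g' <= dotv lam g.

Definition KY (R : realType) (I : finType) (A : I -> finType) (Y : {set I})
  (B : {set config A}) : set (coordJ A Y -> R) :=
  conv_hull B (fun x => @Xi R I A Y (PY Y x)).

Definition KtY (R : realType) (I : finType) (A : I -> finType) (Y : {set I})
  (alpha : forall i : Yt Y, A (val i)) (B : {set config A})
  : set (coordJt alpha -> R) :=
  conv_hull B (fun x => @Xit R I A Y alpha (PY Y x)).

(* Both LPs optimise a linear functional over the convex hull of finitely many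
   points, so their maxima are attained at vertices, and a vertex is optimal
   iff it beats every other vertex.  On the vertex of a configuration x, the
   objective of LP1 is S(x) = sum_{i in Y} log h_i(x_i), and that of LP2 is
   S(x) - sum_{i in Y} log h_i(alpha_i): the coordinates dropped in LP2 are
   exactly those whose weight log(h_i(alpha_i)/h_i(alpha_i)) vanishes.  The
   two objectives differ by a constant, so they have the same maximisers.
   Dropping the alpha_i-coordinates loses no information, as x_i = alpha_i is
   recovered from all other indicators of block i being 0. *)

From HB Require Import structures.
From mathcomp Require Import all_boot all_order all_algebra.
From mathcomp Require Import all_classical all_reals all_analysis.
Import Order.TTheory GRing.Theory Num.Theory.
Local Open Scope ring_scope.

Section ConvHullLP.
Context {R : realType} {C J : finType} {B : {set C}} {f : C -> J -> R}.

Lemma conv_hull_vertex (c : C) : c \in B -> conv_hull B f (f c).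
Proof.
move=> cB; exists (fun c' => (c' == c)%:R); split.
- by move=> c'; rewrite ler0n.
- by move=> c' c'B; case: eqP => // ec; rewrite ec cB in c'B.
- by rewrite (bigD1 c) //= eqxx big1 ?addr0 // => c' /negPf ->.
- move=> j; rewrite (bigD1 c) //= eqxx mul1r big1 ?addr0 //.
  by move=> c' /negPf ->; rewrite mul0r.
Qed.

Lemma dotv_conv_comb (l : J -> R) {w : C -> R} {g : J -> R} :
  (forall j, g j = \sum_c w c * f c j) ->
  dotv l g = \sum_c w c * dotv l (f c).
Proof.
move=> gE; rewrite /dotv; under eq_bigr => j _ do rewrite gE mulr_sumr.
rewrite exchange_big /=; apply: eq_bigr => c _; rewrite mulr_sumr.
by apply: eq_bigr => j _; rewrite mulrCA.
Qed.

Lemma is_lp_max_conv_hullP (l : J -> R) (c : C) : c \in B ->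
  is_lp_max (conv_hull B f) l (f c) <->
  (forall c', c' \in B -> dotv l (f c') <= dotv l (f c)).
Proof.
move=> cB; split=> [[_ maxc] c' c'B|maxc]; first exact/maxc/conv_hull_vertex.
split=> [|g [w [w_ge0 w_out w_sum1 gE]]]; first exact: conv_hull_vertex.
rewrite (dotv_conv_comb l gE).
apply: (@le_trans _ _ (\sum_c' w c' * dotv l (f c))); last first.
  by rewrite -mulr_suml w_sum1 mul1r.
apply: ler_sum => c' _; have [c'B|c'NB] := boolP (c' \in B).
  exact/ler_wpM2l/maxc.
by rewrite w_out // !mul0r.
Qed.

End ConvHullLP.

Section IndicatorVectors.
Context {R : realType} {I : finType} {A : I -> finType} {Y : {set I}}.
Context {alpha : forall i : Yt Y, A (val i)}.

Lemma sum_Xi (G : forall i : Yt Y, A (val i) -> R) (xY : configY A Y) :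
  \sum_(j : coordJ A Y) G (tag j) (tagged j) * Xi R xY j = \sum_i G i (xY i).
Proof.
rewrite -(sig_big_dep (fun _ => true) (fun _ _ => true)
  (fun i a => G i a * Xi R xY (Tagged (fun i : Yt Y => A (val i)) a))) /=.
apply: eq_bigr => i _; rewrite (bigD1 (xY i)) //= /Xi /= eqxx mulr1.
by rewrite big1 ?addr0 // => a /negPf ->; rewrite mulr0.
Qed.

Lemma sum_Xit (G : forall i : Yt Y, A (val i) -> R) (xY : configY A Y) :
  (forall i, G i (alpha i) = 0) ->
  \sum_(j : coordJt alpha) G (tag (val j)) (tagged (val j)) * Xit R alpha xY j
    = \sum_i G i (xY i).
Proof.
move=> G_alpha; rewrite -sum_Xi.
pose F j := G (tag j) (tagged j) * Xi R xY j.
pose off_alpha := [pred j : coordJ A Y | tagged j != alpha (tag j)].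
transitivity (\sum_(j in off_alpha) F j).
  by rewrite (big_sub off_alpha); apply: eq_bigr.
rewrite big_mkcond /=; apply: eq_bigr => j _; rewrite inE /F.
by case: eqP => //= ->; rewrite G_alpha mul0r.
Qed.

Lemma Xit_inj : injective (Xit R alpha).
Proof.
have agree u v : Xit R alpha u = Xit R alpha v ->
    forall i, u i != alpha i -> v i = u i.
  move=> Euv i ui_alpha.
  pose j : coordJt alpha :=
    exist _ (Tagged (fun i : Yt Y => A (val i)) (u i)) ui_alpha.
  have := congr1 (fun f => f j) Euv; rewrite /Xit /Xi /= eqxx.
  by case: eqP => [->|_] //; move/eqP; rewrite oner_eq0.
move=> u v Euv; apply: boolp.functional_extensionality_dep => i.
have [ui_alpha|/(agree _ _ Euv) //] := eqVneq (u i) (alpha i).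
have [vi_alpha|/(agree _ _ (esym Euv)) //] := eqVneq (v i) (alpha i).
by rewrite ui_alpha vi_alpha.
Qed.

Context {h : forall i : Yt Y, A (val i) -> R}.

Lemma dotv_lam_Xi (xY : configY A Y) :
  dotv (lam h) (Xi R xY) = \sum_i ln (h i (xY i)).
Proof. exact: (sum_Xi (fun i a => ln (h i a))). Qed.

Hypothesis h_gt0 : forall i a, 0 < h i a.

Lemma dotv_lamt_Xit (xY : configY A Y) :
  dotv (lamt h alpha) (Xit R alpha xY)
    = \sum_i ln (h i (xY i)) - \sum_i ln (h i (alpha i)).
Proof.
rewrite [LHS](sum_Xit (fun i a => ln (h i a / h i (alpha i)))); last first.
  by move=> i; rewrite divff ?ln1 ?gt_eqF.
by rewrite -sumrB; apply: eq_bigr => i _; rewrite ln_div ?posrE.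
Qed.

End IndicatorVectors.

Theorem proposition1 (R : realType) (I : finType) (A : I -> finType)
  (HA : forall i : I, (1 < #|A i|)%N)
  (Y : {set I})
  (h : forall i : Yt Y, A (val i) -> R)
  (hpos : forall (i : Yt Y) (a : A (val i)), 0 < h i a)
  (B : {set config A})
  (Hinj : forall x x' : config A, x \in B -> x' \in B -> PY Y x = PY Y x' -> x = x')
  (alpha : forall i : Yt Y, A (val i)) :
  (forall x x' : config A, x \in B -> x' \in B ->
     Xit R alpha (PY Y x) = Xit R alpha (PY Y x') -> x = x') /\
  (forall x : config A, x \in B ->
    (is_lp_max (@KY R I A Y B) (lam h) (Xi R (PY Y x)) <->
     is_lp_max (@KtY R I A Y alpha B) (lamt h alpha) (Xit R alpha (PY Y x))) /\
    (is_lp_max (@KtY R I A Y alpha B) (lamt h alpha) (Xit R alpha (PY Y x)) <->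
     forall x' : config A, x' \in B ->
       \sum_(i : Yt Y) ln (h i (x' (val i))) <= \sum_(i : Yt Y) ln (h i (x (val i))))).
Proof.
split=> [x x' xB x'B /Xit_inj|x xB]; first exact: Hinj.
have LP2_opt : is_lp_max (@KtY R I A Y alpha B) (lamt h alpha) (Xit R alpha (PY Y x)) <->
    forall x', x' \in B -> \sum_i ln (h i (x' (val i))) <= \sum_i ln (h i (x (val i))).
  rewrite /KtY is_lp_max_conv_hullP //.
  split=> opt x' x'B; move: (opt x' x'B).
    by rewrite !(dotv_lamt_Xit hpos) lerD2r.
  by rewrite !(dotv_lamt_Xit hpos) lerD2r.
split; last exact: LP2_opt.
rewrite LP2_opt /KY is_lp_max_conv_hullP //.
by split=> opt x' x'B; move: (opt x' x'B); rewrite !dotv_lam_Xi.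
Qed.
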